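(* Let $G$ be a Ricci-flat graph that contains no edge $(u,v)$ with $d(u)=d(v)=2$. Then every edge of $G$ is contained in a cycle of length $3$, or a cycle of length $4$, or a cycle of length $5$.
   Context: All graphs are simple (no loops or multiple edges), undirected, connected and locally finite; $d(x)$ is the degree of $x$, $d(x,y)$ the graph distance, and $\Gamma(x)$ the set of neighbours of $x$. For a vertex $x$ and $\alpha\in[0,1]$ let $\mu_x^\alpha$ be the probability measure with $\mu_x^\alpha(x)=\alpha$, $\mu_x^\alpha(z)=\frac{1-\alpha}{d(x)}$ for $z\sim x$, and $0$ otherwise. The transportation distance is $W(\mu_1,\mu_2)=\inf_A\sum_{u,v}A(u,v)d(u,v)$ over all couplings $A$ of $\mu_1,\mu_2$ (i.e. $A:V\times V\to[0,1]$ with finite support, $\sum_v A(u,v)=\mu_1(u)$, $\sum_u A(u,v)=\mu_2(v)$). Set $k_\alpha(x,y)=1-W(\mu_x^\alpha,\mu_y^\alpha)/d(x,y)$ and define the (Lin–Lu–Yau) Ricci curvature $k(x,y)=\lim_{\alpha\to1}k_\alpha(x,y)/(1-\alpha)$. A graph is Ricci-flat if $k(x,y)=0$ for every edge $(x,y)$. An edge is contained in a cycle of length $\ell$ if some cycle subgraph of $G$ with $\ell$ vertices uses that edge. *)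

From HB Require Import structures.
From mathcomp Require Import all_boot all_order all_algebra.
From mathcomp Require Import all_classical all_reals all_analysis.
Set Implicit Arguments. Unset Strict Implicit. Unset Printing Implicit Defensive.
Import Order.TTheory GRing.Theory Num.Theory numFieldNormedType.Exports.
Local Open Scope ring_scope.
Local Open Scope classical_set_scope.

(* A (possibly infinite) locally finite graph on vertex type V is given by its
   neighbour lists N : V -> seq V, i.e. Gamma(x) = N x (as a set). *)
Section Graph.
Variable V : eqType.
Variable N : V -> seq V.

Definition adj (x y : V) : bool := y \in N x.

Definition simple_graph : Prop :=
  (forall x, uniq (N x)) /\ (forall x, x \notin N x) /\
  (forall x y, (y \in N x) = (x \in N y)).

Definition connected_graph : Prop :=
  forall x y : V, exists p : seq V, path adj x p /\ last x p = y.

Definition deg (x : V) : nat := size (N x).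

(* graph distance: least length of a walk from x to y (0 if none exists) *)
Definition walk_of_len (x y : V) (n : nat) : bool :=
  `[< exists p : seq V, [/\ size p = n, path adj x p & last x p = y] >].

Definition gdist (x y : V) : nat :=
  match pselect (exists n, walk_of_len x y n) with
  | left h => ex_minn h
  | right _ => 0%N
  end.

Variable R : realType.

Definition mu (alpha : R) (x : V) (z : V) : R :=
  if z == x then alpha
  else if z \in N x then (1 - alpha) / (deg x)%:R else 0.

Definition is_coupling (mu1 mu2 : V -> R) (A : V -> V -> R) (s : seq (V * V))
  : Prop :=
  [/\ (forall u v, A u v != 0 -> (u, v) \in s),
      (forall u v, 0 <= A u v <= 1),
      (forall u, \sum_(p <- undup s | p.1 == u) A p.1 p.2 = mu1 u) &
      (forall v, \sum_(p <- undup s | p.2 == v) A p.1 p.2 = mu2 v)].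

Definition cost (A : V -> V -> R) (s : seq (V * V)) : R :=
  \sum_(p <- undup s) A p.1 p.2 * (gdist p.1 p.2)%:R.

Definition Wdist (mu1 mu2 : V -> R) : R :=
  inf [set c | exists A s, is_coupling mu1 mu2 A s /\ c = cost A s].

Definition kappa_alpha (x y : V) (alpha : R) : R :=
  1 - Wdist (mu alpha x) (mu alpha y) / (gdist x y)%:R.

Definition ricci_flat : Prop :=
  forall x y : V, adj x y ->
    (fun alpha : R => kappa_alpha x y alpha / (1 - alpha)) @ (1 : R)^'- --> 0.

Definition edge_in_cycle (x y : V) (l : nat) : Prop :=
  exists c : seq V,
    [/\ size c = l, uniq c, cycle adj c &
        exists i, (i < l)%N /\
          ((nth x c i = x /\ nth x c (i.+1 %% l) = y) \/
           (nth x c i = y /\ nth x c (i.+1 %% l) = x))].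

End Graph.

From HB Require Import structures.
From mathcomp Require Import all_boot all_order all_algebra.
From mathcomp Require Import all_classical all_reals all_analysis.
From mathcomp Require Import ring lra.
Set Implicit Arguments. Unset Strict Implicit. Unset Printing Implicit Defensive.
Import Order.TTheory GRing.Theory Num.Theory numFieldNormedType.Exports.
Local Open Scope ring_scope.
Local Open Scope classical_set_scope.

(* If [x] is a leaf, the transport plan that keeps part of the mass of [x] in
   place and spreads the mass of [y] over [y] and its other neighbours shows
   k(x,y) >= 2/d(y) > 0.  Otherwise suppose [xy] lies on no cycle of length 3,
   4 or 5.  Then the other neighbours of [x] are at distance >= 2 from [y] and
   >= 3 from the other neighbours of [y] (and symmetrically), so the potential
   equal to 1 at x, 0 at y, 2 on the rest of Gamma(x) and -1 on the rest of
   Gamma(y) is 1-Lipschitz on the two stars.  By weak Kantorovich duality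
   k(x,y) <= 2/d(x) + 2/d(y) - 2, which is at most -1/3 unless d(x) = d(y) = 2.
   In both cases k(x,y) <> 0. *)

Lemma not_cvg0_at_left (R : realType) (f : R -> R) (t b e : R) :
  b < t -> 0 < e -> (forall a, b < a -> a < t -> e <= `|f a|) ->
  ~ f @ t^'- --> 0.
Proof.
move=> bt e0 fe cvf.
have : \forall a \near t^'-, False.
  near=> a; suff : e < e by rewrite ltxx.
  apply: (@le_lt_trans _ _ `|f a|); last by near: a; exact: cvgr0_norm_lt.
  apply: fe; near: a; [exact: nbhs_left_gt | exact: nbhs_left_lt].
by case/filter_ex.
Unshelve. all: by end_near.
Qed.

Section SeqSums.
Variable R : numDomainType.
Implicit Types (T : eqType).

Lemma sum_seq_pred1 T (r : seq T) (F : T -> R) v : uniq r ->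
  \sum_(w <- r | w == v) F w = if v \in r then F v else 0.
Proof.
elim: r => [|a r IH] /=; first by rewrite big_nil.
move=> /andP[anr ur]; rewrite big_cons IH // inE.
by case: (eqVneq a v) => [<-|] //=; rewrite (negbTE anr) addr0.
Qed.

Lemma sum_seq_except T (r : seq T) (F : T -> R) v c :
  uniq r -> v \in r -> {in r, forall w, w != v -> F w = c} ->
  \sum_(w <- r) F w = F v + c *+ (size r).-1.
Proof.
move=> ur vr Fc; rewrite (bigD1_seq v) //=; congr (_ + _).
rewrite big_seq_cond (eq_bigr (fun=> c)) => [|w /andP[]]; last exact: Fc.
rewrite -big_seq_cond big_const_seq iter_addr_0; congr (_ *+ _).
by rewrite -(count_predC (pred1 v) r) count_uniq_mem // vr.
Qed.

End SeqSums.

Lemma two_div_add_two_div_le (R : realFieldType) (a b : nat) :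
  (2 <= a)%N -> (2 <= b)%N -> ~ (a = 2%N /\ b = 2%N) ->
  2 / a%:R + 2 / b%:R - 2 <= - (1 / 3) :> R.
Proof.
have le_half n : (2 <= n)%N -> 2 / n%:R <= 1 :> R.
  by move=> n2; rewrite ler_pdivrMr ?ltr0n 1?(leq_trans _ n2) // mul1r ler_nat.
have le_third n : (3 <= n)%N -> 2 / n%:R <= 2 / 3 :> R.
  move=> n3; rewrite ler_pdivrMr ?ltr0n 1?(leq_trans _ n3) //.
  have : 3 <= n%:R :> R by rewrite ler_nat.
  lra.
move=> a2 b2 not22; case: (leqP 3 a) => [a3|a_lt3].
  by have := le_third _ a3; have := le_half _ b2; lra.
case: (leqP 3 b) => [b3|b_lt3].
  by have := le_third _ b3; have := le_half _ a2; lra.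
by case: not22; split; apply/eqP; rewrite eqn_leq -ltnS ?a_lt3 ?b_lt3.
Qed.

Section Marginals.
Variables (R : numDomainType) (I T : eqType).
Variables (S : seq I) (A : I -> R) (pr : I -> T) (m : T -> R).
Hypotheses (uS : uniq S) (A_ge0 : forall i, 0 <= A i).
Hypothesis marginal : forall w, \sum_(i <- S | pr i == w) A i = m w.

Lemma marginal_supp i : i \in S -> A i != 0 -> m (pr i) != 0.
Proof.
move=> iS; apply: contra_neq => m0; apply/eqP; rewrite eq_le A_ge0 andbT.
rewrite -m0 -marginal big_mkcond (bigD1_seq i) //= eqxx lerDl.
by apply: sumr_ge0 => j _; case: ifP.
Qed.

Lemma sum_marginal (X : seq T) (F : T -> R) :
  uniq X -> (forall w, w \notin X -> m w = 0) ->
  \sum_(i <- S) A i * F (pr i) = \sum_(w <- X) F w * m w.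
Proof.
move=> uX m0; transitivity
    (\sum_(i <- S) \sum_(w <- X) if w == pr i then F w * A i else 0).
  apply: eq_big_seq => i iS; rewrite -big_mkcond /= sum_seq_pred1 //.
  case: ifPn => [_|/m0 mi]; first by rewrite mulrC.
  have [->|/(marginal_supp iS)] := eqVneq (A i) 0; first by rewrite mul0r.
  by rewrite mi eqxx.
rewrite exchange_big /=; apply: eq_bigr => w _.
rewrite -big_mkcond -marginal mulr_sumr /=.
by apply: eq_bigl => i; exact: eq_sym.
Qed.

End Marginals.

Section Transport.
Variables (R : realType) (V : eqType) (N : V -> seq V).
Implicit Types (A : V -> V -> R) (s : seq (V * V)).

Lemma cost_ge0 (mu1 mu2 : V -> R) A s : is_coupling mu1 mu2 A s -> 0 <= cost N A s.
Proof.
case=> _ A01 _ _; apply: sumr_ge0 => p _.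
by rewrite mulr_ge0 //; case/andP: (A01 p.1 p.2).
Qed.

Lemma Wdist_le_cost (mu1 mu2 : V -> R) A s :
  is_coupling mu1 mu2 A s -> Wdist N mu1 mu2 <= cost N A s.
Proof.
move=> cp; apply: ge_inf; last by exists A, s.
by exists 0 => c [A' [s' [cp' ->]]]; exact: cost_ge0 cp'.
Qed.

(* The first case only occurs if there is no coupling: [inf set0] is 0. *)
Lemma Wdist_ge (mu1 mu2 : V -> R) L :
  (forall A s, is_coupling mu1 mu2 A s -> L <= cost N A s) ->
  Wdist N mu1 mu2 = 0 \/ L <= Wdist N mu1 mu2.
Proof.
move=> Lcost; rewrite /Wdist; set E := [set c | _].
have [[c Ec]|noE] := pselect (exists c, E c).
  by right; apply: lb_le_inf => [|_ [A [s [cp ->]]]]; [exists c | exact: Lcost].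
by left; rewrite (_ : E = set0) ?inf0 //; apply/seteqP; split => // c Ec; apply: noE; exists c.
Qed.

Lemma cost_ge_potentials (mu1 mu2 : V -> R) A s (X Y : seq V) (g h : V -> R) :
  is_coupling mu1 mu2 A s -> uniq X -> uniq Y ->
  (forall u, u \notin X -> mu1 u = 0) -> (forall v, v \notin Y -> mu2 v = 0) ->
  (forall u v, u \in X -> v \in Y -> g u - h v <= (gdist N u v)%:R) ->
  \sum_(u <- X) g u * mu1 u - \sum_(v <- Y) h v * mu2 v <= cost N A s.
Proof.
case=> _ A01 marg1 marg2 uX uY mu1X mu2Y gh.
have A0 p : 0 <= A p.1 p.2 by case/andP: (A01 p.1 p.2).
have uS := undup_uniq s.
rewrite -(sum_marginal uS A0 marg1 _ uX mu1X) -(sum_marginal uS A0 marg2 _ uY mu2Y).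
rewrite -sumrB /cost big_seq [leRHS]big_seq; apply: ler_sum => p pS.
have [->|Ap0] := eqVneq (A p.1 p.2) 0; first by rewrite !mul0r subrr.
rewrite -mulrBr ler_wpM2l // gh //.
- by apply: contraNT (marginal_supp uS A0 marg1 pS Ap0) => /mu1X ->.
- by apply: contraNT (marginal_supp uS A0 marg2 pS Ap0) => /mu2Y ->.
Qed.

End Transport.

Section Distance.
Variables (V : eqType) (N : V -> seq V).
Hypotheses (simpleN : simple_graph N) (connN : connected_graph N).

Lemma nbr_uniq x : uniq (N x).
Proof. by case: simpleN. Qed.

Lemma nbr_irrefl x : x \notin N x.
Proof. by case: simpleN => _ []. Qed.

Lemma adj_sym x y : adj N x y = adj N y x.
Proof. by case: simpleN => _ [_ H]; rewrite /adj H. Qed.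

Lemma adj_neq x y : adj N x y -> x != y.
Proof. by apply: contraL => /eqP ->; exact: nbr_irrefl. Qed.

Lemma deg_gt0 x y : adj N x y -> (0 < deg N x)%N.
Proof. by rewrite /adj /deg; case: (N x). Qed.

Lemma deg1_nbrs x y : adj N x y -> deg N x = 1%N -> N x = [:: y].
Proof. by rewrite /adj /deg; case: (N x) => [|z [|]] //=; rewrite inE => /eqP ->. Qed.

Lemma gdist_le_walk x y p : path (adj N) x p -> last x p = y ->
  (gdist N x y <= size p)%N.
Proof.
move=> xp xpy; rewrite /gdist; case: pselect => [h|]; last first.
  by case; exists (size p); apply/asboolP; exists p.
by case: ex_minnP => m _; apply; apply/asboolP; exists p.
Qed.

Lemma gdist_ge k x y :
  (forall p, path (adj N) x p -> last x p = y -> (k <= size p)%N) ->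
  (k <= gdist N x y)%N.
Proof.
move=> walk_ge; rewrite /gdist; case: pselect => [h|]; last first.
  by have [p [xp xpy]] := connN x y; case; exists (size p); apply/asboolP; exists p.
by case: ex_minnP => m /asboolP [p [<- xp xpy]] _; exact: walk_ge.
Qed.

Lemma gdist_refl x : gdist N x x = 0%N.
Proof. by apply/eqP; rewrite -leqn0; exact: (@gdist_le_walk _ _ [::]). Qed.

Lemma gdist_ge1 x y : x != y -> (1 <= gdist N x y)%N.
Proof. by move=> xy; apply: gdist_ge => -[|z p] //= _ yx; rewrite yx eqxx in xy. Qed.

Lemma gdist_ge2 x y : x != y -> ~~ adj N x y -> (2 <= gdist N x y)%N.
Proof.
move=> xy nxy; apply: gdist_ge => -[|z [|z' p]] //=.
- by move=> _ yx; rewrite yx eqxx in xy.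
- by rewrite andbT => xz zy; rewrite -zy xz in nxy.
Qed.

Lemma gdist_ge3 x y : x != y -> ~~ adj N x y ->
  (forall w, adj N x w -> ~~ adj N w y) -> (3 <= gdist N x y)%N.
Proof.
move=> xy nxy nw; apply: gdist_ge => -[|z [|z' [|z'' p]]] //=.
- by move=> _ yx; rewrite yx eqxx in xy.
- by rewrite andbT => xz zy; rewrite -zy xz in nxy.
- by rewrite andbT => /andP[xz zz'] z'y; move: (nw z xz); rewrite -z'y zz'.
Qed.

Lemma gdist_adj x y : adj N x y -> gdist N x y = 1%N.
Proof.
move=> xy; apply/eqP; rewrite eqn_leq gdist_ge1 ?adj_neq // andbT.
by apply: (@gdist_le_walk _ _ [:: y]) => //=; rewrite xy.
Qed.

End Distance.

Lemma edge_in_cycle_cons (V : eqType) (N : V -> seq V) x y p :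
  uniq [:: x, y & p] -> cycle (adj N) [:: x, y & p] ->
  edge_in_cycle N x y (size p).+2.
Proof.
move=> up cp; exists [:: x, y & p]; split => //.
by exists 0%N; split => //; left; rewrite modn_small.
Qed.

Section Curvature.
Variables (R : realType) (V : eqType) (N : V -> seq V).
Hypotheses (simpleN : simple_graph N) (connN : connected_graph N).

Let adjC := adj_sym simpleN.
Let neq_adj := adj_neq simpleN.

Lemma mu_center (al : R) x : mu N al x x = al.
Proof. by rewrite /mu eqxx. Qed.

Lemma mu_nbr (al : R) x u : u \in N x -> mu N al x u = (1 - al) / (deg N x)%:R.
Proof. by move=> ux; rewrite /mu ux ifN // eq_sym neq_adj. Qed.

Lemma mu_out (al : R) x u : u \notin x :: N x -> mu N al x u = 0.
Proof. by rewrite inE negb_or /mu => /andP[/negPf -> /negPf ->]. Qed.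

Lemma sum_mu (F : V -> R) al x :
  \sum_(u <- x :: N x) F u * mu N al x u =
  al * F x + (1 - al) / (deg N x)%:R * \sum_(u <- N x) F u.
Proof.
rewrite big_cons mu_center mulrC mulr_sumr; congr (_ + _).
by apply: eq_big_seq => u ux; rewrite mu_nbr // mulrC.
Qed.

Lemma uniq_star x : uniq (x :: N x).
Proof. by rewrite /= nbr_irrefl ?nbr_uniq. Qed.

Section Leaf.
Variables (x y : V).
Hypotheses (xy : adj N x y) (leaf_x : N x = [:: y]).

Definition leaf_plan (al c : R) (u v : V) : R :=
  if u == x then (if v == x then c else if v == y then al - c else 0)
  else if u == y then (if (v == y) || (v \in N y) && (v != x) then c else 0)
  else 0.

Definition leaf_plan_supp : seq (V * V) := (x, x) :: (x, y) :: map (pair y) (y :: N y).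

Let yx : y != x. Proof. by rewrite eq_sym neq_adj. Qed.
Let x_nbr_y : x \in N y. Proof. by rewrite -[_ \in _]/(adj N y x) adjC. Qed.
Let deg_y_gt0 : 0 < (deg N y)%:R :> R. Proof. by rewrite ltr0n (deg_gt0 x_nbr_y). Qed.

Lemma leaf_plan_row_y (al c : R) : c * (deg N y)%:R = 1 - al ->
  \sum_(v <- y :: N y) leaf_plan al c y v = 1 - al.
Proof.
move=> c_deg.
rewrite (sum_seq_except (v := x) (c := c) (uniq_star y)) ?inE ?x_nbr_y ?orbT //=.
  by rewrite /leaf_plan (negPf yx) eqxx eq_sym (negPf yx) eqxx andbF add0r -mulr_natr c_deg.
move=> v; rewrite /leaf_plan (negPf yx) eqxx inE => /orP[/eqP ->|->] ->; by rewrite ?eqxx ?orbT.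
Qed.

Lemma uniq_leaf_plan_supp : uniq leaf_plan_supp.
Proof.
have pair_inj : injective (@pair V V y) by move=> ? ? [->].
have x_notin z : (x, z) \notin map (pair y) (N y).
  by apply/negP => /mapP [w _ [xy' _]]; move: yx; rewrite xy' eqxx.
rewrite /leaf_plan_supp /= !inE !xpair_eqE eqxx eq_sym (negPf yx) !x_notin.
by rewrite mem_map // (nbr_irrefl simpleN) (map_inj_uniq pair_inj) (nbr_uniq simpleN).
Qed.

Lemma leaf_plan_supp_spec (al c : R) u v :
  leaf_plan al c u v != 0 -> (u, v) \in leaf_plan_supp.
Proof.
rewrite /leaf_plan /leaf_plan_supp 2!in_cons !xpair_eqE.
have [->|ux] := eqVneq u x.
  have [->|vx] := eqVneq v x; first by [].
  by have [->|_] := eqVneq v y; rewrite ?eqxx ?orbT.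
have [->|uy] := eqVneq u y; last by rewrite eqxx.
case: ifP => [yv _|]; last by rewrite eqxx.
by rewrite map_f ?orbT // inE; case/orP: yv => [->|/andP[->]] //; rewrite orbT.
Qed.

Lemma leaf_plan_row (al c : R) u : c * (deg N y)%:R = 1 - al ->
  \sum_(p <- leaf_plan_supp | p.1 == u) leaf_plan al c p.1 p.2 = mu N al x u.
Proof.
move=> c_deg; rewrite 2!big_cons big_map /=.
have [<-|xu] := eqVneq x u.
  rewrite big_pred0 => [|j]; last exact: negPf.
  by rewrite addr0 mu_center /leaf_plan !eqxx (negPf yx) addrC subrK.
have [<-|yu] := eqVneq y u.
  by rewrite leaf_plan_row_y // mu_nbr ?leaf_x ?mem_head // /deg leaf_x divr1.
by rewrite big_pred0 // mu_out // leaf_x !inE negb_or !(eq_sym u) xu.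
Qed.

Lemma leaf_plan_col (al c : R) v : c * (deg N y)%:R = 1 - al ->
  \sum_(p <- leaf_plan_supp | p.2 == v) leaf_plan al c p.1 p.2 = mu N al y v.
Proof.
move=> c_deg; rewrite 2!big_cons big_map /= sum_seq_pred1 ?uniq_star //.
have c_mu : (1 - al) / (deg N y)%:R = c by rewrite -c_deg mulfK ?gt_eqF.
have [<-|xv] := eqVneq x v.
  rewrite (negPf yx) inE x_nbr_y orbT mu_nbr // c_mu.
  by rewrite /leaf_plan eqxx (negPf yx) eqxx andbF eq_sym (negPf yx) addr0.
have [<-|yv] := eqVneq y v.
  by rewrite mem_head mu_center /leaf_plan !eqxx (negPf yx) /= subrK.
rewrite inE eq_sym (negPf yv) /=; case: ifP => vy.
  by rewrite mu_nbr // c_mu /leaf_plan (negPf yx) eqxx eq_sym (negPf yv) vy eq_sym xv.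
by rewrite mu_out // inE negb_or eq_sym yv vy.
Qed.

Lemma leaf_plan_coupling (al c : R) :
  1 / 2 <= al -> al < 1 -> c * (deg N y)%:R = 1 - al ->
  is_coupling (mu N al x) (mu N al y) (leaf_plan al c) leaf_plan_supp.
Proof.
move=> al_ge al_lt1 c_deg.
have c_ge0 : 0 <= c by rewrite -(pmulr_lge0 _ deg_y_gt0) c_deg subr_ge0 ltW.
have c_le : c <= 1 - al by rewrite -c_deg ler_peMr // ler1n (deg_gt0 x_nbr_y).
rewrite /is_coupling undup_id ?uniq_leaf_plan_supp //; split.
- exact: leaf_plan_supp_spec.
- by move=> u v; rewrite /leaf_plan; do ! case: ifP => _; apply/andP; split; lra.
- by move=> u; exact: leaf_plan_row.
- by move=> v; exact: leaf_plan_col.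
Qed.

Lemma leaf_plan_cost (al c : R) : c * (deg N y)%:R = 1 - al ->
  cost N (leaf_plan al c) leaf_plan_supp = 1 - 2 * c.
Proof.
move=> c_deg; have := leaf_plan_row_y c_deg; rewrite big_cons.
rewrite /cost undup_id ?uniq_leaf_plan_supp // 2!big_cons big_map big_cons /=.
rewrite !gdist_refl gdist_adj // (eq_big_seq (leaf_plan al c y)) => [|v vy]; last first.
  by rewrite gdist_adj // mulr1.
rewrite /leaf_plan !eqxx (negPf yx) /= => row_y; lra.
Qed.

Lemma leaf_kappa_ratio (al : R) : 1 / 2 <= al -> al < 1 ->
  2 / (deg N y)%:R <= kappa_alpha N x y al / (1 - al).
Proof.
move=> al_ge al_lt1; have al1 : 0 < 1 - al by rewrite subr_gt0.
have c_deg : (1 - al) / (deg N y)%:R * (deg N y)%:R = 1 - al by rewrite divfK ?gt_eqF.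
have := Wdist_le_cost N (leaf_plan_coupling al_ge al_lt1 c_deg).
rewrite leaf_plan_cost // /kappa_alpha gdist_adj // divr1 ler_pdivlMr //.
by rewrite mulrAC -mulrA; lra.
Qed.

End Leaf.

Section FarEdge.
Variables (x y : V).
Hypothesis xy : adj N x y.
Hypotheses (no3 : ~ edge_in_cycle N x y 3) (no4 : ~ edge_in_cycle N x y 4).
Hypothesis no5 : ~ edge_in_cycle N x y 5.

Lemma far_no_common_nbr w : ~~ (adj N x w && adj N y w).
Proof.
apply/negP => /andP[xw yw]; apply: no3; apply: (@edge_in_cycle_cons _ _ _ _ [:: w]).
  by rewrite /= !inE negb_or (neq_adj xy) (neq_adj xw) (neq_adj yw).
by rewrite /= xy yw (adjC w) xw.
Qed.

Section OtherNbrs.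
Variables (u v : V).
Hypotheses (xu : adj N x u) (uy : u != y) (yv : adj N y v) (vx : v != x).

Let uv : u != v.
Proof. by apply: contraNneq (far_no_common_nbr u) => uv; rewrite {2}uv xu yv. Qed.

Lemma far_nbrs_not_adj : ~~ adj N u v.
Proof.
apply/negP => uv_adj; apply: no4; apply: (@edge_in_cycle_cons _ _ _ _ [:: v; u]).
  by rewrite /= !inE !negb_or (neq_adj xy) (neq_adj xu) (neq_adj yv) (eq_sym x v) vx
    (eq_sym y u) uy (eq_sym v u) uv.
by rewrite /= xy yv (adjC v) uv_adj (adjC u) xu.
Qed.

Lemma far_nbrs_no_common_nbr w : ~~ (adj N u w && adj N w v).
Proof.
apply/negP => /andP[uw wv]; apply: no5; apply: (@edge_in_cycle_cons _ _ _ _ [:: v; w; u]).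
  have xw : x != w by apply: contraNneq (far_no_common_nbr v) => ->; rewrite wv yv.
  have yw : y != w by apply: contraNneq (far_no_common_nbr u) => ->; rewrite xu (adjC w) uw.
  rewrite /= !inE !negb_or (neq_adj xy) (neq_adj xu) (neq_adj yv) (eq_sym x v) vx.
  rewrite (eq_sym y u) uy (eq_sym v u) uv xw yw (eq_sym v w) (neq_adj wv) (eq_sym w u).
  by rewrite (neq_adj uw).
by rewrite /= xy yv (adjC v) wv (adjC w) uw (adjC u) xu.
Qed.

Lemma far_gdist_nbrs : (3 <= gdist N u v)%N.
Proof.
apply: gdist_ge3 => //; first exact: far_nbrs_not_adj.
by move=> w uw; apply: contraNN (far_nbrs_no_common_nbr w) => wv; rewrite uw.
Qed.

End OtherNbrs.

Lemma far_gdist_x v : adj N y v -> v != x -> (2 <= gdist N x v)%N.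
Proof.
move=> yv vx; rewrite gdist_ge2 // 1?eq_sym //.
by apply: contraNN (far_no_common_nbr v) => ->.
Qed.

Lemma far_gdist_y u : adj N x u -> u != y -> (2 <= gdist N u y)%N.
Proof.
move=> xu uy; rewrite gdist_ge2 // adjC.
by apply: contraNN (far_no_common_nbr u) => ->; rewrite andbT.
Qed.

(* Two halves of one potential: they agree on [x] and [y], the only points
   the two stars share when [xy] lies on no triangle. *)
Definition pot_x (u : V) : R := if u == x then 1 else if u == y then 0 else 2.
Definition pot_y (v : V) : R := if v == y then 0 else if v == x then 1 else -1.

Lemma pot_lipschitz u v : u \in x :: N x -> v \in y :: N y ->
  pot_x u - pot_y v <= (gdist N u v)%:R.
Proof.
have dist_ge k u' v' : (k <= gdist N u' v')%N -> k%:R <= (gdist N u' v')%:R :> R.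
  by rewrite ler_nat.
rewrite /pot_x /pot_y !inE => /orP[/eqP->|xu] /orP[/eqP->|yv].
- by rewrite !eqxx gdist_adj // subr0.
- have vy : v != y by rewrite eq_sym neq_adj.
  rewrite eqxx (negPf vy); have [->|vx] := eqVneq v x; first by rewrite subrr.
  by apply: le_trans (dist_ge 2%N _ _ (far_gdist_x yv vx)); rewrite opprK.
- have ux : u != x by rewrite eq_sym neq_adj.
  rewrite eqxx (negPf ux) subr0; have [->|uy] := eqVneq u y; first exact: ler0n.
  exact: dist_ge 2%N _ _ (far_gdist_y xu uy).
- have ux : u != x by rewrite eq_sym neq_adj.
  have vy : v != y by rewrite eq_sym neq_adj.
  rewrite (negPf ux) (negPf vy); have [->|uy] := eqVneq u y.
    have [->|vx] := eqVneq v x; last by rewrite gdist_adj // sub0r opprK.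
    by have := ler0n R (gdist N y x); lra.
  have [->|vx] := eqVneq v x; first by have := dist_ge 1%N _ _ (gdist_ge1 connN ux); lra.
  by have := dist_ge 3%N _ _ (far_gdist_nbrs xu uy yv vx); lra.
Qed.

Lemma sum_pot_x (al : R) :
  \sum_(u <- x :: N x) pot_x u * mu N al x u =
  al + 2 * (1 - al) - 2 * ((1 - al) / (deg N x)%:R).
Proof.
rewrite sum_mu (sum_seq_except (v := y) (c := 2)) ?nbr_uniq //; last first.
  by move=> w xw wy; rewrite /pot_x (negPf wy) ifN // eq_sym neq_adj.
rewrite /pot_x eqxx eq_sym (negPf (neq_adj xy)) eqxx -/(deg N x).
have := deg_gt0 xy; case: (deg N x) => // n _ /=.
rewrite add0r -[2 *+ _]mulr_natr -natr1; field.
by rewrite natr1 pnatr_eq0.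
Qed.

Lemma sum_pot_y (al : R) :
  \sum_(v <- y :: N y) pot_y v * mu N al y v = 2 * ((1 - al) / (deg N y)%:R) - (1 - al).
Proof.
have yx : adj N y x by rewrite adjC.
rewrite sum_mu (sum_seq_except (v := x) (c := -1)) ?nbr_uniq //; last first.
  by move=> w yw wx; rewrite /pot_y (negPf wx) ifN // eq_sym neq_adj.
rewrite /pot_y eqxx (negPf (neq_adj xy)) eqxx -/(deg N y).
have := deg_gt0 yx; case: (deg N y) => // n _ /=.
rewrite -[-1 *+ _]mulr_natr -natr1; field.
by rewrite natr1 pnatr_eq0.
Qed.

Lemma far_kappa_ratio_le (al : R) : al < 1 ->
  kappa_alpha N x y al = 1 \/
  kappa_alpha N x y al / (1 - al) <= 2 / (deg N x)%:R + 2 / (deg N y)%:R - 2.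
Proof.
move=> al_lt1; have al1 : 0 < 1 - al by rewrite subr_gt0.
have [W0|] := Wdist_ge (fun A s cp => cost_ge_potentials cp (uniq_star x) (uniq_star y)
  (@mu_out al x) (@mu_out al y) pot_lipschitz).
  by left; rewrite /kappa_alpha W0 mul0r subr0.
rewrite sum_pot_x sum_pot_y /kappa_alpha gdist_adj // divr1 => W_ge; right.
rewrite ler_pdivrMr // (_ : _ * (1 - al) =
  2 * ((1 - al) / (deg N x)%:R) + 2 * ((1 - al) / (deg N y)%:R) - 2 * (1 - al)); last by ring.
lra.
Qed.

End FarEdge.

Lemma leaf_edge_not_flat x y : adj N x y -> deg N x = 1%N ->
  ~ (fun al : R => kappa_alpha N x y al / (1 - al)) @ 1^'- --> 0.
Proof.
move=> xy dx; apply: (@not_cvg0_at_left _ _ _ (1 / 2) (2 / (deg N y)%:R)).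
- by rewrite ltr_pdivrMr // mul1r ltr1n.
- by rewrite divr_gt0 // ltr0n (deg_gt0 (y := x)) // -adjC.
move=> al al_gt al_lt1; apply: le_trans (ler_norm _).
by apply: (leaf_kappa_ratio xy (deg1_nbrs xy dx)) => //; rewrite ltW.
Qed.

Lemma far_edge_not_flat x y : adj N x y ->
  ~ edge_in_cycle N x y 3 -> ~ edge_in_cycle N x y 4 -> ~ edge_in_cycle N x y 5 ->
  (2 <= deg N x)%N -> (2 <= deg N y)%N -> ~ (deg N x = 2%N /\ deg N y = 2%N) ->
  ~ (fun al : R => kappa_alpha N x y al / (1 - al)) @ 1^'- --> 0.
Proof.
move=> xy no3 no4 no5 x2 y2 not22.
apply: (@not_cvg0_at_left _ _ _ 0 (1 / 3)) => // al al_gt0 al_lt1.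
have al1 : 0 < 1 - al by rewrite subr_gt0.
have [->|kappa_le] := far_kappa_ratio_le xy no3 no4 no5 al_lt1.
  rewrite ger0_norm ?divr_ge0 ?ler01 ?(ltW al1) // ler_pdivlMr //; lra.
have := two_div_add_two_div_le R x2 y2 not22.
by rewrite ler_normr => bound; apply/orP; right; lra.
Qed.

End Curvature.

Theorem lemma5 (R : realType) (V : eqType) (N : V -> seq V) :
  simple_graph N -> connected_graph N ->
  ricci_flat N R ->
  (forall u v : V, adj N u v -> ~ (deg N u = 2%N /\ deg N v = 2%N)) ->
  forall x y : V, adj N x y ->
    edge_in_cycle N x y 3 \/ edge_in_cycle N x y 4 \/ edge_in_cycle N x y 5.
Proof.
move=> simpleN connN flat no22 x y xy.
have yx : adj N y x by rewrite adj_sym.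
have deg_ge2 u v : adj N u v -> (2 <= deg N u)%N.
  move=> uv; have := deg_gt0 uv; rewrite leq_eqVlt eq_sym => /orP[/eqP u1|//].
  by case: (leaf_edge_not_flat simpleN connN uv u1 (flat u v uv)).
have [c3|no3] := pselect (edge_in_cycle N x y 3); first by left.
have [c4|no4] := pselect (edge_in_cycle N x y 4); first by right; left.
have [c5|no5] := pselect (edge_in_cycle N x y 5); first by right; right.
by case: (far_edge_not_flat simpleN connN xy no3 no4 no5 (deg_ge2 _ _ xy) (deg_ge2 _ _ yx)
  (no22 x y xy) (flat x y xy)).
Qed.
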